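(* Let $\mathbb F$ be any field. The problem of classifying pairs $(A,B)$ of commuting $n\times n$ matrices over $\mathbb F$ ($n=1,2,\dots$) up to weak similarity is wild. Moreover, if $\mathbb F$ is not the field with two elements, then the problem of classifying up to weak similarity those pairs $(A,B)$ of commuting matrices over $\mathbb F$ for which $\alpha A+\beta B$ is nonsingular for some $\alpha,\beta\in\mathbb F$ is also wild.
   Context: Two pairs $(A,B)$ and $(A',B')$ of $n\times n$ matrices over $\mathbb F$ are weakly similar if $(A',B')=(S^{-1}(\alpha A+\beta B)S,\;S^{-1}(\gamma A+\delta B)S)$ for some nonsingular $S\in\mathbb F^{n\times n}$ and some nonsingular $\begin{bmatrix}\alpha&\beta\\ \gamma&\delta\end{bmatrix}\in\mathbb F^{2\times 2}$. Two pairs $(M,N)$, $(M',N')$ are similar if $(S^{-1}MS,S^{-1}NS)=(M',N')$ for some nonsingular $S$. A matrix classification problem $\mathcal M$ is given by a set $\mathcal M_1$ of tuples of matrices and a set $\mathcal M_2$ of admissible transformations. It is wild if there is a tuple $M(x,y)=(M_1(x,y),\dots,M_t(x,y))$ of matrices whose entries are noncommutative polynomials in $x,y$ over $\mathbb F$ such that (i) $M(A,B)\in\mathcal M_1$ for all $A,B\in\mathbb F^{n\times n}$, $n\ge 1$ (scalar entries $\alpha$ replaced by $\alpha I_n$), and (ii) $M(A,B)$ is carried to $M(A',B')$ by transformations from $\mathcal M_2$ iff $(A,B)$ and $(A',B')$ are similar. *)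

From HB Require Import structures.
From mathcomp Require Import all_boot all_order all_algebra.
Set Implicit Arguments. Unset Strict Implicit. Unset Printing Implicit Defensive.
Import Order.TTheory GRing.Theory Num.Theory.
Local Open Scope ring_scope.

(* Noncommutative polynomials in two variables x, y over F, as syntax trees.
   Every element of the free algebra F<x,y> is represented by such a term;
   only their evaluation at matrices matters below. *)
Inductive ncpoly (F : Type) : Type :=
  | NCconst of F
  | NCx
  | NCy
  | NCadd of ncpoly F & ncpoly F
  | NCmul of ncpoly F & ncpoly F.
Arguments NCx {F}.
Arguments NCy {F}.

Fixpoint ncEval (F : fieldType) (n : nat) (A B : 'M[F]_n) (p : ncpoly F)
  : 'M[F]_n :=
  match p with
  | NCconst c => c%:M
  | NCx => A
  | NCy => B
  | NCadd p q => ncEval A B p + ncEval A B q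
  | NCmul p q => ncEval A B p *m ncEval A B q
  end.

Definition ncBlockEval (F : fieldType) (k n : nat)
  (P : 'I_k -> 'I_k -> ncpoly F) (A B : 'M[F]_n)
  : 'M[F]_(\sum_(i < k) n)%N :=
  @mxblock F k k (fun _ => n) (fun _ => n) (fun i j => ncEval A B (P i j)).

Definition similar_pairs (F : fieldType) (m : nat) (M N M' N' : 'M[F]_m) : Prop :=
  exists2 S : 'M[F]_m, S \in unitmx &
    invmx S *m M *m S = M' /\ invmx S *m N *m S = N'.

Definition weakly_similar (F : fieldType) (m : nat) (A B A' B' : 'M[F]_m) : Prop :=
  exists (S : 'M[F]_m) (a b c d : F),
    [/\ S \in unitmx, a * d - b * c != 0,
        A' = invmx S *m (a *: A + b *: B) *m S &
        B' = invmx S *m (c *: A + d *: B) *m S].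

(* A classification problem for pairs of square matrices: the set M_1 is
   given by a predicate [inM1] (for every size m), the admissible
   transformations by the relation [trans] ("carried to"). *)
Definition wild_pair_problem (F : fieldType)
  (inM1 : forall m : nat, 'M[F]_m -> 'M[F]_m -> Prop)
  (trans : forall m : nat, 'M[F]_m -> 'M[F]_m -> 'M[F]_m -> 'M[F]_m -> Prop)
  : Prop :=
  exists (k : nat) (M1 M2 : 'I_k -> 'I_k -> ncpoly F),
    (forall (n : nat) (A B : 'M[F]_n), (0 < n)%N ->
       inM1 _ (ncBlockEval M1 A B) (ncBlockEval M2 A B)) /\
    (forall (n : nat) (A B A' B' : 'M[F]_n), (0 < n)%N ->
       trans _ (ncBlockEval M1 A B) (ncBlockEval M2 A B)
               (ncBlockEval M1 A' B') (ncBlockEval M2 A' B')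
       <-> similar_pairs A B A' B').

Definition commuting_pair (F : fieldType) (m : nat) (A B : 'M[F]_m) : Prop :=
  A *m B = B *m A.

Definition commuting_pair_nonsing (F : fieldType) (m : nat) (A B : 'M[F]_m) : Prop :=
  A *m B = B *m A /\ exists a b : F, a *: A + b *: B \in unitmx.

From HB Require Import structures.
From mathcomp Require Import all_boot all_order all_algebra.
Set Implicit Arguments. Unset Strict Implicit. Unset Printing Implicit Defensive.
Import GRing.Theory.
Local Open Scope ring_scope.

(* Write P = M1(A,B) and Q = M2(A,B); as 5 x 5 block matrices they act on
   block rows by
     (z0,z1,z2,z3,z4) P = (z0 + z1, z1 + z3, z2 + z3 A, z3, 0),
     (z0,z1,z2,z3,z4) Q = (z2, z3 A, z3 B, 0, z4).
   A similarity T of (A,B) lifts to diag(T,...,T). Conversely, the only joint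
   eigenvalues of (P,Q) are (1,0) and (0,1), so the coefficient matrix of a
   weak similarity between two such pairs is either the identity or swaps the
   two matrices. The swap is impossible since Q is the identity on ker P while
   no multiple of P is the identity on ker Q. Finally, if S intertwines two
   such pairs and e_i is the block row with 1 in slot i, the words (P-1)^2,
   (P-1)Q and Q^2 send e_3 to e_0, A e_0 and B e_0, so the block T with
   e_0 S = T e_0 intertwines (A,B) with (A',B'). *)

Lemma ncEval_conj (F : fieldType) n (T A B : 'M[F]_n) (p : ncpoly F) :
  T \in unitmx ->
  T *m ncEval (invmx T *m A *m T) (invmx T *m B *m T) p = ncEval A B p *m T.
Proof.
move=> T_unit; elim: p => [c | | | p IHp q IHq | p IHp q IHq] /=.
- by rewrite mul_mx_scalar mul_scalar_mx.
- by rewrite !mulmxA mulmxV // mul1mx.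
- by rewrite !mulmxA mulmxV // mul1mx.
- by rewrite mulmxDr mulmxDl IHp IHq.
- by rewrite mulmxA IHp -mulmxA IHq mulmxA.
Qed.

Lemma ncBlockEval_conj (F : fieldType) k n (M : 'I_k -> 'I_k -> ncpoly F)
    (T A B : 'M[F]_n) : T \in unitmx ->
  \mxdiag_(i < k) T *m ncBlockEval M (invmx T *m A *m T) (invmx T *m B *m T) =
  ncBlockEval M A B *m \mxdiag_(i < k) T.
Proof.
move=> T_unit; rewrite /ncBlockEval mul_mxdiag_mxblock mul_mxblock_mxdiag.
by apply: eq_mxblock => i j; rewrite ncEval_conj.
Qed.

Lemma mxdiag_unit (F : fieldType) k n (T : 'M[F]_n) :
  T \in unitmx -> \mxdiag_(i < k) T \in unitmx.
Proof.
move=> T_unit; rewrite -row_free_unit /row_free rank_mxdiag.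
by under eq_bigr do rewrite mxrank_unit //.
Qed.

Lemma similar_weakly_similar_ncBlockEval (F : fieldType) k n
    (M1 M2 : 'I_k -> 'I_k -> ncpoly F) (A B A' B' : 'M[F]_n) :
  similar_pairs A B A' B' ->
  weakly_similar (ncBlockEval M1 A B) (ncBlockEval M2 A B)
                 (ncBlockEval M1 A' B') (ncBlockEval M2 A' B').
Proof.
case=> T T_unit [<- <-]; have D_unit := mxdiag_unit k T_unit.
exists (\mxdiag_(i < k) T), 1, 0, 0, 1; split => //.
- by rewrite mulr1 mulr0 subr0 oner_eq0.
- by rewrite scale1r scale0r addr0 -[RHS]mulmxA -ncBlockEval_conj // mulKmx.
- by rewrite scale1r scale0r add0r -[RHS]mulmxA -ncBlockEval_conj // mulKmx.
Qed.

Lemma scaler_fix (F : fieldType) (V : lmodType F) (c : F) (v : V) :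
  (v == c *: v) = (c == 1) || (v == 0).
Proof.
by rewrite -subr_eq0 -{1}[v]scale1r -scalerBl scaler_eq0 subr_eq0 [1 == c]eq_sym.
Qed.

Lemma scalar1_neq0 (F : fieldType) n : (0 < n)%N -> (1%:M : 'M[F]_n) != 0.
Proof.
by move=> n_gt0; apply: contraTneq n_gt0 => one0; rewrite -(mxrank1 F n) one0 mxrank0.
Qed.

Lemma lincomb2_solve (F : fieldType) (V : lmodType F) (x y z : V) (a b c d l u : F) :
  a * d - b * c != 0 -> a *: x + b *: y = l *: z -> c *: x + d *: y = u *: z ->
  x = ((a * d - b * c)^-1 * (d * l - b * u)) *: z /\
  y = ((a * d - b * c)^-1 * (a * u - c * l)) *: z.
Proof.
move=> nzD eq_l eq_u; rewrite -!scalerA.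
split; apply: (scalerI nzD); rewrite scalerKV // [RHS]scalerBl -![in RHS]scalerA.
- rewrite -eq_l -eq_u !scalerDr !scalerA scalerBl (mulrC d a) (mulrC d b).
  by rewrite opprD addrACA subrr addr0.
- rewrite -eq_l -eq_u !scalerDr !scalerA scalerBl (mulrC a c) (mulrC a d).
  by rewrite opprD addrACA subrr add0r (mulrC b c).
Qed.

Lemma lincomb2_spectrum_cases (F : fieldType) (a b c d : F) :
  a * d - b * c != 0 ->
  (((a * d - b * c)^-1 * d, (a * d - b * c)^-1 * - c) \in [:: (1, 0); (0, 1)]) ->
  (((a * d - b * c)^-1 * - b, (a * d - b * c)^-1 * a) \in [:: (1, 0); (0, 1)]) ->
  [/\ a = 1, b = 0, c = 0 & d = 1] \/ a = 0 /\ d = 0.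
Proof.
set D := a * d - b * c => nzD.
have solve y k : D^-1 * y = k -> y = k * D by move<-; rewrite mulrC mulVKf.
have solveN y k : D^-1 * - y = k -> y = - (k * D) by move/solve/(canRL opprK).
rewrite !inE !xpair_eqE => /orP[] /andP[/eqP/solve d_D /eqP/solveN c_D]
                           /orP[] /andP[/eqP/solveN b_D /eqP/solve a_D];
  rewrite ?mul1r ?mul0r ?oppr0 in a_D b_D c_D d_D.
- by move: nzD; rewrite /D a_D c_D mul0r mulr0 subrr eqxx.
- left; move: a_D d_D nzD; rewrite /D b_D c_D mulr0 subr0 => a_ad d_ad ad_neq0.
  have a_neq0 : a != 0 by apply: contraNneq ad_neq0 => ->; rewrite mul0r.
  have d1 : d = 1 by apply: (mulfI a_neq0); rewrite mulr1 -a_ad.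
  by move: d_ad; rewrite d1 mulr1 => <-.
- by right.
- by move: nzD; rewrite /D b_D d_D mul0r mulr0 subrr eqxx.
Qed.

Section WildPair.
Variable F : fieldType.

Definition wild_M1 (i j : 'I_5) : ncpoly F :=
  match nat_of_ord i, nat_of_ord j with
  | 0, 0 | 1, 0 | 1, 1 | 2, 2 | 3, 1 | 3, 3 => NCconst 1
  | 3, 2 => NCx
  | _, _ => NCconst 0
  end.

Definition wild_M2 (i j : 'I_5) : ncpoly F :=
  match nat_of_ord i, nat_of_ord j with
  | 2, 0 | 4, 4 => NCconst 1
  | 3, 1 => NCx
  | 3, 2 => NCy
  | _, _ => NCconst 0
  end.

Variable n : nat.
Local Notation N := (\sum_(i < 5) n)%N.
Local Notation P A B := (ncBlockEval wild_M1 A B).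
Local Notation Q A B := (ncBlockEval wild_M2 A B).

Definition row5 m (z0 z1 z2 z3 z4 : 'M[F]_(m, n)) : 'M[F]_(m, N) :=
  \mxrow_(j < 5) [:: z0; z1; z2; z3; z4]`_j.

Definition slot m (Y : 'M[F]_(m, N)) (j : nat) : 'M[F]_(m, n) :=
  submxrow Y (inord j).

Lemma row5_slots m (Y : 'M[F]_(m, N)) :
  Y = row5 (slot Y 0) (slot Y 1) (slot Y 2) (slot Y 3) (slot Y 4).
Proof.
rewrite -{1}(submxrowK Y); apply: eq_mxrow => -[[|[|[|[|[|j]]]]] lt_j5] //=;
  by congr submxrow; apply: val_inj; rewrite /= inordK.
Qed.

Lemma row5_inj m (y0 y1 y2 y3 y4 z0 z1 z2 z3 z4 : 'M[F]_(m, n)) :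
  row5 y0 y1 y2 y3 y4 = row5 z0 z1 z2 z3 z4 ->
  [/\ y0 = z0, y1 = z1, y2 = z2, y3 = z3 & y4 = z4].
Proof.
by rewrite /row5 => /eq_mxrowP eq_slot; split;
  [exact: (eq_slot 0) | exact: (eq_slot 1) | exact: (eq_slot 2) |
   exact: (eq_slot 3) | exact: (eq_slot 4)].
Qed.

Lemma row5_0 m : row5 0 0 0 0 0 = 0 :> 'M[F]_(m, N).
Proof. by rewrite -mxrow0; apply: eq_mxrow => -[[|[|[|[|[|j]]]]] lt_j5]. Qed.

Lemma row5D m (y0 y1 y2 y3 y4 z0 z1 z2 z3 z4 : 'M[F]_(m, n)) :
  row5 y0 y1 y2 y3 y4 + row5 z0 z1 z2 z3 z4 =
  row5 (y0 + z0) (y1 + z1) (y2 + z2) (y3 + z3) (y4 + z4).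
Proof. by rewrite -mxrowD; apply: eq_mxrow => -[[|[|[|[|[|j]]]]] lt_j5]. Qed.

Lemma row5N m (z0 z1 z2 z3 z4 : 'M[F]_(m, n)) :
  - row5 z0 z1 z2 z3 z4 = row5 (- z0) (- z1) (- z2) (- z3) (- z4).
Proof. by rewrite -mxrowN; apply: eq_mxrow => -[[|[|[|[|[|j]]]]] lt_j5]. Qed.

Lemma row5Z m c (z0 z1 z2 z3 z4 : 'M[F]_(m, n)) :
  c *: row5 z0 z1 z2 z3 z4 = row5 (c *: z0) (c *: z1) (c *: z2) (c *: z3) (c *: z4).
Proof.
rewrite -mul_scalar_mx mul_mxrow; apply: eq_mxrow => -[[|[|[|[|[|j]]]]] lt_j5];
  by rewrite /= mul_scalar_mx.
Qed.

Lemma mul_row5 m p (M : 'M[F]_(p, m)) (z0 z1 z2 z3 z4 : 'M[F]_(m, n)) :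
  M *m row5 z0 z1 z2 z3 z4 =
  row5 (M *m z0) (M *m z1) (M *m z2) (M *m z3) (M *m z4).
Proof. by rewrite mul_mxrow; apply: eq_mxrow => -[[|[|[|[|[|j]]]]] lt_j5]. Qed.

Lemma row5_firstE (z : 'M[F]_n) : row5 z 0 0 0 0 = z *m row5 1%:M 0 0 0 0.
Proof. by rewrite mul_row5 mulmx1 !mulmx0. Qed.

Lemma row5_mulP m (A B : 'M[F]_n) (z0 z1 z2 z3 z4 : 'M[F]_(m, n)) :
  row5 z0 z1 z2 z3 z4 *m P A B = row5 (z0 + z1) (z1 + z3) (z2 + z3 *m A) z3 0.
Proof.
rewrite /ncBlockEval mul_mxrow_mxblock; apply: eq_mxrow => j.
rewrite !big_ord_recl big_ord0.
by case: j => [[|[|[|[|[|j]]]]] lt_j5] //=;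
  rewrite /wild_M1 /= !mul_mx_scalar ?scale1r ?scale0r ?addr0 ?add0r.
Qed.

Lemma row5_mulQ m (A B : 'M[F]_n) (z0 z1 z2 z3 z4 : 'M[F]_(m, n)) :
  row5 z0 z1 z2 z3 z4 *m Q A B = row5 z2 (z3 *m A) (z3 *m B) 0 z4.
Proof.
rewrite /ncBlockEval mul_mxrow_mxblock; apply: eq_mxrow => j.
rewrite !big_ord_recl big_ord0.
by case: j => [[|[|[|[|[|j]]]]] lt_j5] //=;
  rewrite /wild_M2 /= !mul_mx_scalar ?scale1r ?scale0r ?addr0 ?add0r.
Qed.

Lemma wild_comm (A B : 'M[F]_n) : P A B *m Q A B = Q A B *m P A B.
Proof.
rewrite -[LHS]mul1mx -[RHS]mul1mx (row5_slots 1%:M) !mulmxA.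
by rewrite !(row5_mulP, row5_mulQ) mul0mx !addr0.
Qed.

Lemma wild_unit (A B : 'M[F]_n) : P A B + Q A B \in unitmx.
Proof.
rewrite -row_free_unit; apply: inj_row_free => v.
rewrite (row5_slots v) mulmxDr row5_mulP row5_mulQ row5D -(row5_0 1).
move=> /row5_inj[eq0 eq1 eq2]; rewrite addr0 add0r => eq3 eq4.
rewrite eq3 !mul0mx !addr0 in eq1 eq2; rewrite eq1 eq2 !addr0 in eq0.
by rewrite eq0 eq1 eq2 eq3 eq4 row5_0.
Qed.

Lemma wild_kerP_fixQ m (A B : 'M[F]_n) (Y : 'M[F]_(m, N)) :
  Y *m P A B = 0 -> Y *m Q A B = Y.
Proof.
rewrite (row5_slots Y) row5_mulP row5_mulQ -(row5_0 m).
move=> /row5_inj[eq0 eq1 eq2 eq3 _].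
rewrite eq3 addr0 in eq1; rewrite eq1 addr0 in eq0.
by rewrite eq3 mul0mx addr0 in eq2; rewrite eq0 eq1 eq2 eq3 !mul0mx.
Qed.

Lemma wild_joint_eigen m (A B : 'M[F]_n) (Y : 'M[F]_(m, N)) l u :
  Y != 0 -> Y *m P A B = l *: Y -> Y *m Q A B = u *: Y ->
  (l, u) \in [:: (1, 0); (0, 1)].
Proof.
rewrite (row5_slots Y) row5_mulP row5_mulQ !row5Z.
move=> nzY /row5_inj[p0 p1 p2 p3 p4] /row5_inj[q0 q1 q2 q3 q4].
have [l1 | l_neq1] := eqVneq l 1.
  rewrite l1 scale1r in p4; rewrite l1 !inE !xpair_eqE eqxx oner_eq0 /= orbF.
  apply: contraNT nzY => u_neq0.
  have u_kill (z : 'M[F]_(m, n)) : 0 = u *: z -> z = 0.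
    by move/esym/eqP; rewrite scaler_eq0 (negPf u_neq0) => /eqP.
  have z3_0 := u_kill _ q3; rewrite z3_0 !mul0mx in q1 q2.
  have z2_0 := u_kill _ q2; rewrite z2_0 in q0.
  by rewrite (u_kill _ q0) (u_kill _ q1) z2_0 z3_0 -p4 row5_0.
have l_kill (z : 'M[F]_(m, n)) : z = l *: z -> z = 0.
  by move/eqP; rewrite scaler_fix (negPf l_neq1) => /eqP.
have z3_0 := l_kill _ p3; rewrite z3_0 mul0mx !addr0 in p1 p2.
have z1_0 := l_kill _ p1; rewrite z1_0 addr0 in p0.
have nz4 : slot Y 4 != 0.
  apply: contraNneq nzY => z4_0.
  by rewrite (l_kill _ p0) z1_0 (l_kill _ p2) z3_0 z4_0 row5_0.
move/esym/eqP: p4; rewrite scaler_eq0 (negPf nz4) orbF => /eqP ->.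
move/eqP: q4; rewrite scaler_fix (negPf nz4) orbF => /eqP ->.
by rewrite !inE eqxx orbT.
Qed.

Lemma row5_mulPsub1 m (A B : 'M[F]_n) (z0 z1 z2 z3 z4 : 'M[F]_(m, n)) :
  row5 z0 z1 z2 z3 z4 *m (P A B - 1%:M) = row5 z1 z3 (z3 *m A) 0 (- z4).
Proof.
rewrite mulmxBr mulmx1 row5_mulP row5N row5D.
by rewrite addrAC subrr add0r addrAC subrr add0r addrAC subrr add0r subrr sub0r.
Qed.

Lemma wild_intertwiner_corner (A B A' B' : 'M[F]_n) (S : 'M[F]_N) :
  S *m P A' B' = P A B *m S -> S *m Q A' B' = Q A B *m S ->
  exists T, [/\ row5 1%:M 0 0 0 0 *m S = row5 T 0 0 0 0,
                A *m T = T *m A' & B *m T = T *m B'].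
Proof.
move=> SP SQ.
have SPsub1 (Y : 'M[F]_(n, N)) : Y *m (P A B - 1%:M) *m S = Y *m S *m (P A' B' - 1%:M).
  by rewrite -!mulmxA mulmxBr mulmxBl SP mulmx1 mul1mx.
have SQr (Y : 'M[F]_(n, N)) : Y *m Q A B *m S = Y *m S *m Q A' B'.
  by rewrite -!mulmxA SQ.
have e3UU : row5 0 0 0 1%:M 0 *m (P A B - 1%:M) *m (P A B - 1%:M) = row5 1%:M 0 0 0 0.
  by rewrite !row5_mulPsub1 mul0mx !oppr0.
have e3UQ : row5 0 0 0 1%:M 0 *m (P A B - 1%:M) *m Q A B = row5 A 0 0 0 0.
  by rewrite row5_mulPsub1 row5_mulQ mul1mx !mul0mx oppr0.
have e3QQ : row5 0 0 0 1%:M 0 *m Q A B *m Q A B = row5 B 0 0 0 0.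
  by rewrite !row5_mulQ mul1mx !mul0mx.
move: (row5_slots (row5 0 0 0 1%:M 0 *m S)).
set w3 := slot _ 3; set w4 := slot _ 4 => defW.
have e0S : row5 1%:M 0 0 0 0 *m S = row5 w3 0 0 0 w4.
  by rewrite -e3UU !SPsub1 defW !row5_mulPsub1 mul0mx !opprK.
have w4_0 : w4 = 0.
  have : row5 1%:M 0 0 0 0 *m Q A B *m S = 0.
    by rewrite row5_mulQ !mul0mx row5_0 mul0mx.
  by rewrite SQr e0S row5_mulQ !mul0mx -(row5_0 n) => /row5_inj[].
rewrite w4_0 in defW e0S; exists w3; split => //.
- have := row5_firstE A; rewrite -e3UQ => /(congr1 (mulmx^~ S)).
  rewrite SQr SPsub1 defW row5_mulPsub1 row5_mulQ -mulmxA e0S mul_row5 !mulmx0.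
  by move/row5_inj => [].
- have := row5_firstE B; rewrite -e3QQ => /(congr1 (mulmx^~ S)).
  rewrite !SQr defW !row5_mulQ -mulmxA e0S mul_row5 !mulmx0.
  by move/row5_inj => [].
Qed.

Lemma wild_intertwiner_similar (A B A' B' : 'M[F]_n) (S : 'M[F]_N) :
  S \in unitmx -> S *m P A' B' = P A B *m S -> S *m Q A' B' = Q A B *m S ->
  similar_pairs A B A' B'.
Proof.
move=> S_unit SP SQ.
have [T [e0S AT BT]] := wild_intertwiner_corner SP SQ.
have [||T' [e0S' _ _]] := @wild_intertwiner_corner A' B' A B (invmx S).
- by rewrite -[LHS](mulmxK S_unit) -[X in X *m invmx S]mulmxA -SP mulKmx.
- by rewrite -[LHS](mulmxK S_unit) -[X in X *m invmx S]mulmxA -SQ mulKmx.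
have T'T : T' *m T = 1%:M.
  have := mulmxKV S_unit (row5 1%:M 0 0 0 0).
  rewrite e0S' row5_firstE -mulmxA e0S mul_row5 !mulmx0.
  by move/row5_inj => [].
have [_ T_unit] := mulmx1_unit T'T.
by exists T => //; rewrite -!mulmxA AT BT !mulKmx.
Qed.

Lemma wild_no_swap (A B A' B' : 'M[F]_n) (S : 'M[F]_N) b c :
  (0 < n)%N -> S \in unitmx ->
  S *m P A' B' = b *: Q A B *m S -> S *m Q A' B' = c *: P A B *m S -> False.
Proof.
move=> n_gt0 S_unit SP SQ.
set e1 := row5 0 1%:M 0 0 0.
have e1S_fixQ : e1 *m S *m Q A' B' = e1 *m S.
  apply: wild_kerP_fixQ.
  by rewrite -mulmxA SP mulmxA -scalemxAr row5_mulQ !mul0mx row5_0 scaler0 mul0mx.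
move: e1S_fixQ; rewrite -mulmxA SQ mulmxA => /(congr1 (mulmx^~ (invmx S))).
rewrite !mulmxK // -scalemxAr row5_mulP row5Z => /row5_inj[c0 c1 _ _ _].
rewrite add0r in c0; rewrite addr0 c0 in c1.
by move: (scalar1_neq0 F n_gt0); rewrite -c1 eqxx.
Qed.

Lemma wild_weak_coefficients (A B A' B' : 'M[F]_n) (S : 'M[F]_N) a b c d :
  (0 < n)%N -> S \in unitmx -> a * d - b * c != 0 ->
  P A' B' = invmx S *m (a *: P A B + b *: Q A B) *m S ->
  Q A' B' = invmx S *m (c *: P A B + d *: Q A B) *m S ->
  [/\ a = 1, b = 0, c = 0 & d = 1] \/ a = 0 /\ d = 0.
Proof.
move=> n_gt0 S_unit nzD defP defQ.
have spectrum (Z' : 'M[F]_(n, N)) l u :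
    Z' != 0 -> Z' *m P A' B' = l *: Z' -> Z' *m Q A' B' = u *: Z' ->
    ((a * d - b * c)^-1 * (d * l - b * u), (a * d - b * c)^-1 * (a * u - c * l))
      \in [:: (1, 0); (0, 1)].
  move=> nzZ' Z'P Z'Q; set Z := Z' *m invmx S.
  have transfer M M' : M' = invmx S *m M *m S -> Z *m M = Z' *m M' *m invmx S.
    by move->; rewrite !mulmxA mulmxK.
  have ZX : Z *m (a *: P A B + b *: Q A B) = l *: Z.
    by rewrite (transfer _ _ defP) Z'P -scalemxAl.
  have ZY : Z *m (c *: P A B + d *: Q A B) = u *: Z.
    by rewrite (transfer _ _ defQ) Z'Q -scalemxAl.
  rewrite !mulmxDr -!scalemxAr in ZX ZY.
  have [ZP ZQ] := lincomb2_solve nzD ZX ZY.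
  apply: wild_joint_eigen ZP ZQ; apply: contraNneq nzZ' => Z0.
  by rewrite -(mulmxKV S_unit Z') -/Z Z0 mul0mx.
have one_neq0 := scalar1_neq0 F n_gt0.
have h0 := @spectrum (row5 1%:M 0 0 0 0) 1 0.
have h4 := @spectrum (row5 0 0 0 0 1%:M) 0 1.
rewrite !row5_mulP !row5_mulQ !mul0mx !addr0 !scale1r !scale0r row5_0 in h0 h4.
rewrite !mulr1 !mulr0 !subr0 !sub0r in h0 h4.
apply: lincomb2_spectrum_cases nzD (h0 _ _ _) (h4 _ _ _) => //;
  by apply: contra_neq one_neq0; rewrite -(row5_0 n) => /row5_inj[].
Qed.

Lemma wild_weakly_similar_similar (A B A' B' : 'M[F]_n) : (0 < n)%N ->
  weakly_similar (P A B) (Q A B) (P A' B') (Q A' B') -> similar_pairs A B A' B'.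
Proof.
move=> n_gt0 [S [a [b [c [d [S_unit nzD defP defQ]]]]]].
have intertwine M M' : M' = invmx S *m M *m S -> S *m M' = M *m S.
  by move->; rewrite !mulmxA mulmxV // mul1mx.
have SP := intertwine _ _ defP; have SQ := intertwine _ _ defQ.
have [[a1 b0 c0 d1] | [a0 d0]] := wild_weak_coefficients n_gt0 S_unit nzD defP defQ.
- rewrite a1 b0 scale1r scale0r addr0 in SP; rewrite c0 d1 scale1r scale0r add0r in SQ.
  exact: wild_intertwiner_similar S_unit SP SQ.
- rewrite a0 scale0r add0r in SP; rewrite d0 scale0r addr0 in SQ.
  by case: (wild_no_swap n_gt0 S_unit SP SQ).
Qed.

End WildPair.

Theorem theorem1 (F : fieldType) :
  wild_pair_problem (@commuting_pair F) (@weakly_similar F) /\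
  ((exists x : F, x != 0 /\ x != 1) ->
   wild_pair_problem (@commuting_pair_nonsing F) (@weakly_similar F)).
Proof.
have similar_iff n (A B A' B' : 'M[F]_n) : (0 < n)%N ->
    weakly_similar (ncBlockEval (wild_M1 F) A B) (ncBlockEval (wild_M2 F) A B)
      (ncBlockEval (wild_M1 F) A' B') (ncBlockEval (wild_M2 F) A' B') <->
    similar_pairs A B A' B'.
  move=> n_gt0; split; first exact: wild_weakly_similar_similar.
  exact: similar_weakly_similar_ncBlockEval.
split.
  exists 5, (wild_M1 F), (wild_M2 F).
  by split=> [n A B _|]; [exact: wild_comm | exact: similar_iff].
move=> _; exists 5, (wild_M1 F), (wild_M2 F).
split=> [n A B _|]; last exact: similar_iff.
split; first exact: wild_comm.
by exists 1, 1; rewrite !scale1r; apply: wild_unit.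
Qed.
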